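(* Let $n\ge 1$, let $B=(B_{ij})$ be a symmetric $n\times n$ matrix over $\mathbb{F}_2$ with zero diagonal, and let $f(x)=\sum_{i<j}B_{ij}x_ix_j$ be the associated boolean function on $\mathbb{Z}_2^n$. Let $\mathcal{C}_B\subseteq\mathbb{F}_2^{2n}$ be the code spanned over $\mathbb{F}_2$ by the rows of the $n\times 2n$ matrix $(B\mid I_n)$. Then the EPC distance of $f$ equals the binary distance $d_b$ of $\mathcal{C}_B$.
   Context: For $x\in\mathbb{Z}_2^n$, $w(x)$ is the Hamming weight. For $x,y\in\mathbb{Z}_2^n$, $x\preceq y$ means $x_j\le y_j$ for all $j$; $\bar a$ is the complement of $a$ ($\bar a_j=a_j+1\bmod 2$); $V_a=\{x: x\preceq a\}$ and, for $k\preceq\mu$, $k+V_{\bar\mu}=\{k+x: x\preceq\bar\mu\}$. Exponents of $(-1)$ are computed mod 2. Binary weight and binary distance: a vector $(\alpha,\beta)\in\mathbb{F}_2^{2n}$ (with $\alpha,\beta\in\mathbb{F}_2^n$) is viewed as a length-$n$ word whose $j$-th letter is the pair $(\alpha_j,\beta_j)$; its binary weight is $w_b(\alpha,\beta)=w_x+2w_y+w_z$, where $w_x,w_y,w_z$ count the indices $j$ with $(\alpha_j,\beta_j)=(1,0)$, $(1,1)$, $(0,1)$ respectively; equivalently $w_b(\alpha,\beta)=w(\alpha)+w(\beta)$. The binary distance $d_b$ of a code is the minimum binary weight of its nonzero codewords. EPC distance: for a boolean function $f$ and $a,k,\mu\in\mathbb{Z}_2^n$ with $k\preceq\mu$, the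 fixed-extended autocorrelation is $v(a,k,\mu)=\sum_{x\in k+V_{\bar\mu}}(-1)^{f(x)+f(x+a)}$. For integers $l\ge1$, $q\ge0$, $f$ satisfies EPC($l$) of order $q$ if $v(a,k,\mu)=0$ for all $a,k,\mu$ with $k\preceq\mu$, $1\le w(a)\le l$ and $0\le w(\mu)\le q$. The EPC distance of $f$ is the largest integer $d\ge1$ such that $f$ satisfies EPC($l$) of order $q$ for all $l\ge1,q\ge0$ with $l+q<d$ (equivalently, the minimum of $w(a)+w(\mu)$ over all $a\neq0$, $k\preceq\mu$ with $v(a,k,\mu)\neq0$). *)

From HB Require Import structures.
From mathcomp Require Import all_boot all_order all_algebra.
Set Implicit Arguments. Unset Strict Implicit. Unset Printing Implicit Defensive.
Import Order.TTheory GRing.Theory Num.Theory.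
Local Open Scope ring_scope.

Notation vecF2 n := 'rV['F_2]_n.

Definition hw n (x : vecF2 n) : nat := #|[set j : 'I_n | x 0 j != 0]|.

Definition prec n (x y : vecF2 n) : bool :=
  [forall j : 'I_n, (x 0 j != 0) ==> (y 0 j != 0)].

Definition compl n (a : vecF2 n) : vecF2 n := \row_j (a 0 j + 1).

Definition Vset n (a : vecF2 n) : {set vecF2 n} := [set x | prec x a].

(* (-1)^e for e in F_2 (exponent taken mod 2) *)
Definition sgn1 (e : 'F_2) : int := if e == 0 then 1 else -1.

Definition quadf n (B : 'M['F_2]_n) (x : vecF2 n) : 'F_2 :=
  \sum_(i < n) \sum_(j < n | (i < j)%N) B i j * x 0 i * x 0 j.

Definition fea n (f : vecF2 n -> 'F_2) (a k mu : vecF2 n) : int :=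
  \sum_(x in [set k + y | y in Vset (compl mu)]) sgn1 (f x + f (x + a)).

Definition EPC n (f : vecF2 n -> 'F_2) (l q : nat) : Prop :=
  forall a k mu : vecF2 n, prec k mu ->
    (1 <= hw a <= l)%N -> (hw mu <= q)%N -> fea f a k mu = 0.

Definition EPC_below n (f : vecF2 n -> 'F_2) (d : nat) : Prop :=
  forall l q : nat, (1 <= l)%N -> (l + q < d)%N -> EPC f l q.

Definition is_EPC_distance n (f : vecF2 n -> 'F_2) (d : nat) : Prop :=
  [/\ (1 <= d)%N, EPC_below f d &
      forall d' : nat, (1 <= d')%N -> EPC_below f d' -> (d' <= d)%N].

Definition wb n (c : vecF2 (n + n)) : nat := (hw (lsubmx c) + hw (rsubmx c))%N.

Definition codeB n (B : 'M['F_2]_n) : {set vecF2 (n + n)} :=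
  [set c : vecF2 (n + n) | (c <= row_mx B 1%:M)%MS].

Definition is_binary_distance n (C : {set vecF2 (n + n)}) (d : nat) : Prop :=
  (exists2 c, (c \in C) && (c != 0) & wb c = d) /\
  (forall c, c \in C -> c != 0 -> (d <= wb c)%N).

(* Write f for quadf B. Since B is symmetric with zero diagonal, f(x + a) = f(x) + f(a) + <aB, x>,
   so the fixed-extended autocorrelation v(a, k, mu) factors as a sign times the character sum
   of y |-> <aB, y> over the subcube V_{bar mu}. That sum vanishes iff aB has a coordinate
   outside the support of mu, hence v(a, k, mu) <> 0 iff aB ⪯ mu. The minimum of w(a) + w(mu)
   over the nonzero pairs is therefore the minimum of w(a) + w(aB) over a <> 0, which is the
   minimum binary weight of the nonzero codewords a (B | I) of C_B. *)
From mathcomp Require Import all_boot all_order all_algebra ring zify.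
Set Implicit Arguments. Unset Strict Implicit. Unset Printing Implicit Defensive.
Import Order.TTheory GRing.Theory Num.Theory.
Local Open Scope ring_scope.

Lemma F2P (x : 'F_2) : x = 0 \/ x = 1.
Proof. by case: x => [[|[|m]] Hm]; [left|right|]; rewrite //; apply/val_inj. Qed.

Lemma F2_addxx (x : 'F_2) : x + x = 0.
Proof. by case: (F2P x) => ->; apply/val_inj. Qed.

Lemma sgn1D (x y : 'F_2) : sgn1 (x + y) = sgn1 x * sgn1 y.
Proof. by case: (F2P x) => ->; case: (F2P y) => ->. Qed.

Lemma sgn1_neq0 (x : 'F_2) : sgn1 x != 0.
Proof. by case: (F2P x) => ->. Qed.

Definition dotv n (u x : vecF2 n) : 'F_2 := \sum_(i < n) x 0 i * u 0 i.

Lemma dotvDr n (u x y : vecF2 n) : dotv u (x + y) = dotv u x + dotv u y.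
Proof. by rewrite /dotv -big_split; apply: eq_bigr => i _; rewrite mxE mulrDl. Qed.

Lemma hw_eq0 n (x : vecF2 n) : (hw x == 0)%N = (x == 0).
Proof.
rewrite /hw cards_eq0; apply/eqP/eqP => [/setP x0|->].
  by apply/rowP => j; move: (x0 j); rewrite !inE mxE => /negbFE/eqP.
by apply/setP => j; rewrite !inE mxE eqxx.
Qed.

Lemma hw_prec n (x y : vecF2 n) : prec x y -> (hw x <= hw y)%N.
Proof.
move=> /forallP xy; apply/subset_leq_card/subsetP => j; rewrite !inE.
exact: implyP (xy j).
Qed.

Lemma prec_refl n (x : vecF2 n) : prec x x.
Proof. by apply/forallP => j; rewrite implybb. Qed.

Lemma prec0x n (x : vecF2 n) : prec 0 x.
Proof. by apply/forallP => j; rewrite mxE eqxx. Qed.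

Lemma prec_compl n (u mu : vecF2 n) :
  prec u mu = [forall j, (compl mu 0 j != 0) ==> (u 0 j == 0)].
Proof.
apply: eq_forallb => j; rewrite mxE.
by case: (F2P (u 0 j)) => ->; case: (F2P (mu 0 j)) => ->.
Qed.

Lemma exists_vecF2_neq0 n : (0 < n)%N -> exists a : vecF2 n, a != 0.
Proof.
move=> n_gt0; exists (delta_mx 0 (Ordinal n_gt0)).
by apply/eqP => /rowP /(_ (Ordinal n_gt0)); rewrite !mxE !eqxx => /eqP; rewrite oner_eq0.
Qed.

(* Translating by the unit vector e_j permutes V_m and flips the sign of every term. *)
Lemma sum_Vset_sgn_dot_eq0 n (m u : vecF2 n) j : m 0 j != 0 -> u 0 j != 0 ->
  \sum_(y in Vset m) sgn1 (dotv u y) = 0.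
Proof.
move=> mj uj; set e : vecF2 n := delta_mx 0 j; set S := \sum_(y in _) _.
have dot_e : dotv u e = 1.
  rewrite /dotv (bigD1 j) //= big1 => [|i nij]; last by rewrite !mxE (negbTE nij) andbF mul0r.
  by rewrite !mxE !eqxx mul1r addr0; case: (F2P (u 0 j)) uj => // ->.
have S_opp : S = - S.
  rewrite {1}/S (reindex_inj (addIr e)) /= -sumrN; apply: eq_big => [y|y _].
    rewrite !inE; apply: eq_forallb => i; rewrite !mxE.
    by case: (eqVneq i j) => [->|_]; rewrite ?mj ?implybT ?addr0.
  by rewrite dotvDr dot_e sgn1D; case: (F2P (dotv u y)) => ->.
have /eqP : S + S = 0 by rewrite {1}S_opp addNr.
by rewrite -mulr2n mulrn_eq0 => /eqP.
Qed.

Lemma sum_Vset_sgn_dot_gt0 n (m u : vecF2 n) :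
  (forall j, m 0 j != 0 -> u 0 j = 0) -> 0 < \sum_(y in Vset m) sgn1 (dotv u y).
Proof.
move=> mu0; rewrite (eq_bigr (fun _ => 1)) => [|y]; last first.
  rewrite inE => /forallP ym; rewrite /dotv big1 // => i _.
  case: (eqVneq (y 0 i) 0) => [->|yi]; first by rewrite mul0r.
  by rewrite mu0 ?mulr0 // (implyP (ym i)).
rewrite sumr_const ltr0n card_gt0; apply/set0Pn; exists 0.
by rewrite inE prec0x.
Qed.

Lemma sum_Vset_sgn_dot_neq0 n (m u : vecF2 n) :
  (\sum_(y in Vset m) sgn1 (dotv u y) != 0) = [forall j, (m 0 j != 0) ==> (u 0 j == 0)].
Proof.
case: (boolP [forall j, _]) => [/forallP mu0|/forallPn [j]].
  by apply/lt0r_neq0/sum_Vset_sgn_dot_gt0 => j /(implyP (mu0 j)) /eqP.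
by rewrite negb_imply => /andP [mj uj]; rewrite (sum_Vset_sgn_dot_eq0 mj uj) eqxx.
Qed.

Section QuadraticForm.
Variables (n : nat) (B : 'M['F_2]_n).
Hypotheses (B_sym : B^T = B) (B_diag0 : forall i, B i i = 0).

Definition upper_form (x y : vecF2 n) : 'F_2 :=
  \sum_(i < n) \sum_(j < n | (i < j)%N) B i j * x 0 i * y 0 j.

Lemma upper_formDD x a : upper_form (x + a) (x + a) =
  upper_form x x + upper_form x a + upper_form a x + upper_form a a.
Proof.
rewrite /upper_form -!big_split /=; apply: eq_bigr => i _.
by rewrite -!big_split; apply: eq_bigr => j _; rewrite !mxE /=; ring.
Qed.

Lemma upper_form_polar x a : upper_form x a + upper_form a x = dotv (a *m B) x.
Proof.
have BT i j : B j i = B i j by rewrite -{1}B_sym mxE.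
transitivity (\sum_(i < n) \sum_(j < n) B i j * x 0 i * a 0 j); last first.
  apply: eq_bigr => i _; rewrite mxE big_distrr; apply: eq_bigr => j _.
  by rewrite [B j i]BT /=; ring.
have upper_form_mkcond y z : upper_form y z =
    \sum_(i < n) \sum_(j < n) if (i < j)%N then B i j * y 0 i * z 0 j else 0.
  by apply: eq_bigr => i _; rewrite big_mkcond.
rewrite !upper_form_mkcond [in X in _ + X]exchange_big -big_split /=.
apply: eq_bigr => i _; rewrite -big_split; apply: eq_bigr => j _ /=.
case: (ltngtP i j) => [|ji|/val_inj ->]; rewrite ?addr0 ?add0r ?B_diag0 ?mul0r ?addr0 //.
by rewrite BT; ring.
Qed.

Lemma quadfD x a : quadf B (x + a) = quadf B x + quadf B a + dotv (a *m B) x.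
Proof.
rewrite -upper_form_polar; move: (upper_formDD x a); rewrite /quadf /upper_form => ->.
ring.
Qed.

Lemma fea_quadf a k mu : fea (quadf B) a k mu =
  sgn1 (quadf B a + dotv (a *m B) k) *
  \sum_(y in Vset (compl mu)) sgn1 (dotv (a *m B) y).
Proof.
rewrite /fea big_imset /= => [|y z _ _]; last exact: addrI.
rewrite mulr_sumr; apply: eq_bigr => y _.
by rewrite (quadfD (k + y)) !addrA F2_addxx add0r dotvDr addrA -sgn1D.
Qed.

Lemma fea_quadf_neq0 a k mu : (fea (quadf B) a k mu != 0) = prec (a *m B) mu.
Proof.
by rewrite fea_quadf mulf_eq0 negb_or sgn1_neq0 sum_Vset_sgn_dot_neq0 prec_compl.
Qed.

Lemma EPC_below_quadfP d :
  EPC_below (quadf B) d <-> forall a, a != 0 -> (d <= hw a + hw (a *m B))%N.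
Proof.
split=> [epc a a_neq0|min_weight l q _ lqd a k mu _ /andP [a_gt0 hal] hmu].
  rewrite leqNgt; apply/negP => lt_d.
  have a_gt0 : (0 < hw a)%N by rewrite lt0n hw_eq0.
  have a_range : (1 <= hw a <= hw a)%N by rewrite a_gt0 leqnn.
  move: (epc _ _ a_gt0 lt_d a 0 (a *m B) (prec0x _) a_range (leqnn _)) => /eqP.
  by rewrite -[_ == 0]negbK fea_quadf_neq0 prec_refl.
apply/eqP; apply: contraT; rewrite fea_quadf_neq0 => /hw_prec haB.
have /min_weight : a != 0 by rewrite -hw_eq0 -lt0n.
lia.
Qed.

Definition codeword (a : vecF2 n) : vecF2 (n + n) := a *m row_mx B 1%:M.

Lemma wb_codeword a : wb (codeword a) = (hw a + hw (a *m B))%N.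
Proof. by rewrite /wb /codeword mul_mx_row row_mxKl row_mxKr mulmx1 addnC. Qed.

Lemma codeword_eq0 a : (codeword a == 0) = (a == 0).
Proof.
rewrite /codeword; apply/eqP/eqP => [/(congr1 rsubmx)|->]; last by rewrite mul0mx.
by rewrite mul_mx_row row_mxKr mulmx1 linear0.
Qed.

Lemma is_binary_distance_codeB d :
  (exists2 a, a != 0 & (hw a + hw (a *m B))%N = d) ->
  (forall a, a != 0 -> (d <= hw a + hw (a *m B))%N) ->
  is_binary_distance (codeB B) d.
Proof.
move=> [a0 a0_neq0 <-] min_weight; split.
  by exists (codeword a0); rewrite ?wb_codeword // inE submxMl codeword_eq0.
move=> c; rewrite inE => /submxP [a ->]; rewrite -/(codeword a) codeword_eq0 wb_codeword.
exact: min_weight.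
Qed.

End QuadraticForm.

Theorem theorem4p1 (n : nat) (B : 'M['F_2]_n) :
  (0 < n)%N -> B^T = B -> (forall i, B i i = 0) ->
  exists d : nat, is_EPC_distance (quadf B) d /\ is_binary_distance (codeB B) d.
Proof.
move=> n_gt0 B_sym B_diag0; have [e e_neq0] := exists_vecF2_neq0 n_gt0.
have [a0 a0_neq0 a0_min] :=
  arg_minnP (P := fun a : vecF2 n => a != 0) (fun a => hw a + hw (a *m B))%N e_neq0.
exists (hw a0 + hw (a0 *m B))%N; split.
  split.
  - by rewrite ltn_addr // lt0n hw_eq0.
  - exact/(EPC_below_quadfP B_sym B_diag0).
  - by move=> d' _ /(EPC_below_quadfP B_sym B_diag0); apply.
by apply: is_binary_distance_codeB; first exists a0.
Qed.
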